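(* Let $A=\langle Q,\delta,\gamma,F\rangle$ be a pomset automaton. If $q\xrightarrow{U}_A q'$, then there exist $\ell\in\mathbb N$, states $q_0,\dots,q_\ell\in Q$ with $q_0=q$ and $q_\ell=q'$, and pomsets $U_0,\dots,U_{\ell-1}$ with $U=U_0\cdots U_{\ell-1}$, such that for each $0\le i<\ell$ the trace $q_i\xrightarrow{U_i}_A q_{i+1}$ is a unit trace.
   Context: Fix a finite alphabet $\Sigma$; pomsets are isomorphism classes of $\Sigma$-labelled posets, $1$ the empty pomset, $a\in\Sigma$ the one-point pomset, $\cdot,\parallel$ sequential/parallel composition, $\mathsf{Pom}^{\mathsf{sp}}$ the smallest set containing $1$ and all $a$ closed under both; the empty product $U_0\cdots U_{-1}$ is $1$. A PA is $A=\langle Q,\delta,\gamma,F\rangle$ with $F\subseteq Q$, $\delta:Q\times\Sigma\to Q$, $\gamma:Q^3\to Q$, with states $\bot\notin F$, $\top\in F$ such that $\delta(\bot,a)=\delta(\top,a)=\bot$, $\gamma(\bot,r,s)=\gamma(\top,r,s)=\bot$. Traces: the smallest relation with $q\xrightarrow{1}_A q$; $q\xrightarrow{a}_A\delta(q,a)$; $q\xrightarrow{U}_A q''\xrightarrow{V}_A q'$ implies $q\xrightarrow{U\cdot V}_A q'$; $r\xrightarrow{U}_A r'\in F$, $s\xrightarrow{V}_A s'\in F$ imply $q\xrightarrow{U\parallel V}_A\gamma(q,r,s)$. A unit trace is either a $\delta$-trace $q\xrightarrow{a}_A\delta(q,a)$ for some $a\in\Sigma$, or a $\gamma$-trace $q\xrightarrow{V\parallel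 W}_A\gamma(q,r,s)$ where $r\xrightarrow{V}_A r'$ and $s\xrightarrow{W}_A s'$ for some $r',s'\in F$. *)

From mathcomp Require Import all_boot.
Set Implicit Arguments. Unset Strict Implicit. Unset Printing Implicit Defensive.


(* A finite Sigma-labelled (partially ordered) set: carrier, order, labels.
   Pomsets are taken up to isomorphism ([lp_iso]). *)
Record lposet (Sigma : finType) := LPoset {
  lp_car : finType;
  lp_le : rel lp_car;
  lp_lab : lp_car -> Sigma }.
Arguments LPoset {Sigma} lp_car lp_le lp_lab.
Arguments lp_car {Sigma} l.
Arguments lp_le {Sigma} l _ _.
Arguments lp_lab {Sigma} l _.

Section Pomsets.
Variable Sigma : finType.
Notation lposet := (lposet Sigma).

Definition lp_iso (U V : lposet) : Prop :=
  exists f : lp_car U -> lp_car V,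
    [/\ bijective f,
        (forall x, lp_lab V (f x) = lp_lab U x) &
        (forall x y, lp_le V (f x) (f y) = lp_le U x y)].

Definition pom_one : lposet :=
  LPoset void (fun _ _ => true) (fun v => of_void Sigma v).

Definition pom_sym (a : Sigma) : lposet :=
  LPoset unit (fun _ _ => true) (fun _ => a).

Definition sum_lab (U V : lposet) (x : (lp_car U + lp_car V)%type) : Sigma :=
  match x with inl u => lp_lab U u | inr v => lp_lab V v end.

Definition seq_le (U V : lposet) : rel (lp_car U + lp_car V)%type :=
  fun x y => match x, y with
  | inl u, inl u' => lp_le U u u'
  | inr v, inr v' => lp_le V v v'
  | inl _, inr _ => true
  | inr _, inl _ => false
  end.

Definition pom_seq (U V : lposet) : lposet :=
  LPoset (lp_car U + lp_car V)%type (@seq_le U V) (@sum_lab U V).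

Definition par_le (U V : lposet) : rel (lp_car U + lp_car V)%type :=
  fun x y => match x, y with
  | inl u, inl u' => lp_le U u u'
  | inr v, inr v' => lp_le V v v'
  | _, _ => false
  end.

Definition pom_par (U V : lposet) : lposet :=
  LPoset (lp_car U + lp_car V)%type (@par_le U V) (@sum_lab U V).

Definition pom_prod (s : seq lposet) : lposet := foldr pom_seq pom_one s.

End Pomsets.

Record PA (Sigma : finType) := MkPA {
  pa_Q : Type;
  pa_delta : pa_Q -> Sigma -> pa_Q;
  pa_gamma : pa_Q -> pa_Q -> pa_Q -> pa_Q;
  pa_F : pa_Q -> Prop;
  pa_bot : pa_Q;
  pa_top : pa_Q;
  pa_bot_nF : ~ pa_F pa_bot;
  pa_top_F : pa_F pa_top;
  pa_delta_bot : forall a, pa_delta pa_bot a = pa_bot;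
  pa_delta_top : forall a, pa_delta pa_top a = pa_bot;
  pa_gamma_bot : forall r s, pa_gamma pa_bot r s = pa_bot;
  pa_gamma_top : forall r s, pa_gamma pa_top r s = pa_bot }.

Arguments pa_Q {Sigma} p.
Arguments pa_delta {Sigma} p _ _.
Arguments pa_gamma {Sigma} p _ _ _.
Arguments pa_F {Sigma} p _.
Arguments pa_bot {Sigma} p.
Arguments pa_top {Sigma} p.

Section Traces.
Variables (Sigma : finType) (A : PA Sigma).

(* Trace relation q -U->_A q' on pomsets (closed under isomorphism,
   i.e. a relation on isomorphism classes). *)
Inductive trace : pa_Q A -> lposet Sigma -> pa_Q A -> Prop :=
| tr_one q : trace q (pom_one Sigma) q
| tr_sym q a : trace q (pom_sym a) (pa_delta A q a)
| tr_seq q q'' q' U V :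
    trace q U q'' -> trace q'' V q' -> trace q (pom_seq U V) q'
| tr_par q r r' s s' U V :
    trace r U r' -> pa_F A r' -> trace s V s' -> pa_F A s' ->
    trace q (pom_par U V) (pa_gamma A q r s)
| tr_iso q q' U V : lp_iso U V -> trace q U q' -> trace q V q'.

Definition unit_trace (q : pa_Q A) (U : lposet Sigma) (q' : pa_Q A) : Prop :=
  (exists a : Sigma, lp_iso U (pom_sym a) /\ q' = pa_delta A q a) \/
  (exists (r s r' s' : pa_Q A) (V W : lposet Sigma),
     [/\ trace r V r' /\ pa_F A r', trace s W s' /\ pa_F A s',
         lp_iso U (pom_par V W) & q' = pa_gamma A q r s]).

End Traces.

From mathcomp Require Import all_boot.
Set Implicit Arguments. Unset Strict Implicit.

(* The empty
   pomset is the empty product, and the rules for a and for U || V each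
   yield a single unit trace.  For U . V the two decompositions are glued
   together; this works because pom_prod sends concatenation of lists to
   sequential composition up to isomorphism. *)

Section Isomorphism.
Variable Sigma : finType.
Implicit Types U V W : lposet Sigma.

Lemma lp_iso_of_cancel U V (f : lp_car U -> lp_car V) (g : lp_car V -> lp_car U) :
  cancel f g -> cancel g f ->
  (forall x, lp_lab V (f x) = lp_lab U x) ->
  (forall x y, lp_le V (f x) (f y) = lp_le U x y) -> lp_iso U V.
Proof. by move=> fK gK f_lab f_le; exists f; split => //; exists g. Qed.

Lemma lp_iso_refl U : lp_iso U U.
Proof. exact: (@lp_iso_of_cancel _ _ id id). Qed.

Lemma lp_iso_sym U V : lp_iso U V -> lp_iso V U.
Proof.
case=> f [[g fK gK] f_lab f_le].
apply: (@lp_iso_of_cancel _ _ g f) => // [x | x y]; first by rewrite -f_lab gK.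
by rewrite -f_le !gK.
Qed.

Lemma lp_iso_trans U V W : lp_iso U V -> lp_iso V W -> lp_iso U W.
Proof.
case=> f [[g fK gK] f_lab f_le]; case=> f' [[g' fK' gK'] f_lab' f_le'].
apply: (@lp_iso_of_cancel _ _ (f' \o f) (g \o g')) => [x | x | x | x y] /=.
- by rewrite fK' fK.
- by rewrite gK gK'.
- by rewrite f_lab' f_lab.
- by rewrite f_le' f_le.
Qed.

Lemma lp_iso_seq U U' V V' :
  lp_iso U U' -> lp_iso V V' -> lp_iso (pom_seq U V) (pom_seq U' V').
Proof.
case=> f [[g fK gK] f_lab f_le]; case=> f' [[g' fK' gK'] f_lab' f_le'].
pose F (x : lp_car (pom_seq U V)) : lp_car (pom_seq U' V') :=
  match x with inl u => inl (f u) | inr v => inr (f' v) end.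
pose G (x : lp_car (pom_seq U' V')) : lp_car (pom_seq U V) :=
  match x with inl u => inl (g u) | inr v => inr (g' v) end.
apply: (@lp_iso_of_cancel _ _ F G) => [[] x | [] x | [] x | [] x [] y] //=.
- by rewrite fK.
- by rewrite fK'.
- by rewrite gK.
- by rewrite gK'.
Qed.

Lemma pom_seqA U V W :
  lp_iso (pom_seq (pom_seq U V) W) (pom_seq U (pom_seq V W)).
Proof.
pose F (x : lp_car (pom_seq (pom_seq U V) W)) : lp_car (pom_seq U (pom_seq V W)) :=
  match x with
  | inl (inl u) => inl u | inl (inr v) => inr (inl v) | inr w => inr (inr w)
  end.
pose G (x : lp_car (pom_seq U (pom_seq V W))) : lp_car (pom_seq (pom_seq U V) W) :=
  match x with
  | inl u => inl (inl u) | inr (inl v) => inl (inr v) | inr (inr w) => inr w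
  end.
by apply: (@lp_iso_of_cancel _ _ F G) => [[[]|] | [|[]] | [[]|] | [[]|] x [[]|]].
Qed.

Lemma pom_seq1l U : lp_iso (pom_seq (pom_one Sigma) U) U.
Proof.
pose F (x : lp_car (pom_seq (pom_one Sigma) U)) : lp_car U :=
  match x with inl v => of_void _ v | inr u => u end.
by apply: (@lp_iso_of_cancel _ _ F inr) => [[[]|] | | [[]|] | [[]|] x [[]|]].
Qed.

Lemma pom_seq1r U : lp_iso (pom_seq U (pom_one Sigma)) U.
Proof.
pose F (x : lp_car (pom_seq U (pom_one Sigma))) : lp_car U :=
  match x with inl u => u | inr v => of_void _ v end.
by apply: (@lp_iso_of_cancel _ _ F inl) => [[|[]] | | [|[]] | [|[]] x [|[]]].
Qed.

Lemma pom_prod_cat (s1 s2 : seq (lposet Sigma)) :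
  lp_iso (pom_prod (s1 ++ s2)) (pom_seq (pom_prod s1) (pom_prod s2)).
Proof.
elim: s1 => [|U s1 IHs1]; first exact/lp_iso_sym/pom_seq1l.
apply: lp_iso_trans (lp_iso_seq (lp_iso_refl U) IHs1) _.
exact/lp_iso_sym/pom_seqA.
Qed.

End Isomorphism.

Section Splice.
Variables (T : Type) (l : nat) (f g : nat -> T).

Definition splice (i : nat) : T := if i < l then f i else g (i - l).

Lemma splice_lt i : i < l -> splice i = f i.
Proof. by rewrite /splice => ->. Qed.

Lemma splice_addr i : splice (l + i) = g i.
Proof. by rewrite /splice ltnNge leq_addr addKn. Qed.

Lemma splice_le i : f l = g 0 -> i <= l -> splice i = f i.
Proof.
move=> fl_g0; rewrite leq_eqVlt => /predU1P[-> | /splice_lt //].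
by rewrite -[l]addn0 splice_addr addn0.
Qed.

Lemma map_splice_iota k :
  [seq splice i | i <- iota 0 (l + k)] =
  [seq f i | i <- iota 0 l] ++ [seq g i | i <- iota 0 k].
Proof.
rewrite iotaD map_cat add0n -[in iota l k](addn0 l) iotaDl -map_comp.
congr (_ ++ _); last by apply: eq_map => i /=; rewrite splice_addr.
by apply/eq_in_map => i; rewrite mem_iota => /andP[_ /splice_lt].
Qed.

End Splice.

Section UnitDecomposition.
Variables (Sigma : finType) (A : PA Sigma).
Implicit Types (q : pa_Q A) (U V : lposet Sigma).

Definition unit_decomposition q U q' : Prop :=
  exists (l : nat) (qs : nat -> pa_Q A) (Us : nat -> lposet Sigma),
    [/\ qs 0 = q, qs l = q',
        lp_iso U (pom_prod [seq Us i | i <- iota 0 l]) &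
        forall i, i < l -> unit_trace (qs i) (Us i) (qs i.+1)].

Lemma unit_trace_sym q a : unit_trace q (pom_sym a) (pa_delta A q a).
Proof. by left; exists a; split; first exact: lp_iso_refl. Qed.

Lemma unit_trace_par q r r' s s' U V :
  trace r U r' -> pa_F A r' -> trace s V s' -> pa_F A s' ->
  unit_trace q (pom_par U V) (pa_gamma A q r s).
Proof.
move=> rU r'F sV s'F; right; exists r, s, r', s', U, V.
by split => //; exact: lp_iso_refl.
Qed.

Lemma unit_decomposition1 q : unit_decomposition q (pom_one Sigma) q.
Proof.
by exists 0, (fun=> q), (fun=> pom_one Sigma); split => //; exact: lp_iso_refl.
Qed.

Lemma unit_decomposition_unit q U q' :
  unit_trace q U q' -> unit_decomposition q U q'.
Proof.
exists 1, (fun i => if i is 0 then q else q'), (fun=> U); split => //.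
- exact/lp_iso_sym/pom_seq1r.
- by case.
Qed.

Lemma unit_decomposition_seq q q'' q' U V :
  unit_decomposition q U q'' -> unit_decomposition q'' V q' ->
  unit_decomposition q (pom_seq U V) q'.
Proof.
move=> [l1 [qs1 [Us1 [qs1_0 qs1_l U_iso U_unit]]]].
move=> [l2 [qs2 [Us2 [qs2_0 qs2_l V_iso V_unit]]]].
have junction : qs1 l1 = qs2 0 by rewrite qs1_l qs2_0.
exists (l1 + l2), (splice l1 qs1 qs2), (splice l1 Us1 Us2); split.
- by rewrite splice_le.
- by rewrite splice_addr.
- rewrite map_splice_iota.
  exact: lp_iso_trans (lp_iso_seq U_iso V_iso) (lp_iso_sym (pom_prod_cat _ _)).
- move=> i; case: (ltnP i l1) => [i_lt _ | /subnKC <-].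
  + rewrite (splice_le junction (ltnW i_lt)) (splice_le junction i_lt) splice_lt //.
    exact: U_unit.
  + by rewrite ltn_add2l -addnS !splice_addr; apply: V_unit.
Qed.

Lemma unit_decomposition_iso q U V q' :
  lp_iso U V -> unit_decomposition q U q' -> unit_decomposition q V q'.
Proof.
move=> UV [l [qs [Us [qs_0 qs_l U_iso Us_unit]]]].
by exists l, qs, Us; split => //; apply: lp_iso_trans (lp_iso_sym UV) U_iso.
Qed.

End UnitDecomposition.

Theorem mainTheorem8 (Sigma : finType) (A : PA Sigma) (q q' : pa_Q A)
    (U : lposet Sigma) :
  trace q U q' ->
  exists (l : nat) (qs : nat -> pa_Q A) (Us : nat -> lposet Sigma),
    [/\ qs 0 = q, qs l = q',
        lp_iso U (pom_prod [seq Us i | i <- iota 0 l]) &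
        forall i, i < l -> unit_trace (qs i) (Us i) (qs i.+1)].
Proof.
elim=> {q U q'} [q | q a | q q'' q' U V _ + _ | q r r' s s' U V rU _ r'F sV _ s'F
                | q q' U V UV _].
- exact: unit_decomposition1.
- exact/unit_decomposition_unit/unit_trace_sym.
- exact: unit_decomposition_seq.
- exact/unit_decomposition_unit/(unit_trace_par _ rU r'F sV s'F).
- exact: unit_decomposition_iso.
Qed.
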